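(* For every $M\in\mathbb{N}\cup\{0\}$ there exists a one-sided shift space over an infinite alphabet that is an $(M+1)$-step shift space and is not conjugate to any $M$-step shift space.
   Context: Following Ott–Tomforde–Willis. For an alphabet $A$, let $\emptyset$ denote the empty sequence, $\Sigma_A^{fin}=\{\emptyset\}\cup\bigcup_{k\ge1}A^k$, $\Sigma_A^{inf}=A^{\mathbb N}$. For infinite $A$ the full shift is $\Sigma_A=\Sigma_A^{inf}\cup\Sigma_A^{fin}$ (for finite $A$ it is $\Sigma_A^{inf}$). The length $l(x)$ is $k$ if $x\in A^k$ and $\infty$ if $x$ is infinite. The topology on $\Sigma_A$ has as basis the generalized cylinders $Z(x,F)=\{y: y_i=x_i\ (1\le i\le k),\ y_{k+1}\notin F\}$ for $x=(x_1,\dots,x_k)\ne\emptyset$ and finite $F\subseteq A$, and $Z(\emptyset,F)=\{y: y_1\notin F\}$. The shift map $\sigma$ deletes the first letter. A shift space over $A$ is a subset $\Lambda\subseteq\Sigma_A$ that is closed, satisfies $\sigma(\Lambda)\subseteq\Lambda$, and has the infinite-extension property: for every $x\in\Lambda$ with $l(x)<\infty$ the set $\{a\in A: xay\in\Lambda$ for some $y\in\Sigma_A\}$ is infinite. For a set $\mathbf F$ of nonempty finite words, $X_{\mathbf F}=X_{\mathbf F}^{inf}\cup X_{\mathbf F}^{fin}$ where $X_{\mathbf F}^{inf}$ is the set of infinite sequences with no subblock in $\mathbf F$ and $X_{\mathbf F}^{fin}$ is the set of finite sequences $x$ for which there are infinitely many $a\in A$ such that $xay\in X_{\mathbf F}^{inf}$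 for some infinite $y$. An $N$-step shift space is a shift space of the form $X_{\mathbf F}$ with every word in $\mathbf F$ of length $N+1$. A conjugacy between shift spaces $\Lambda\subseteq\Sigma_A$, $Y\subseteq\Sigma_B$ is a continuous, shift-commuting bijection $\phi:\Lambda\to Y$ with $l(\phi(x))=l(x)$ for all $x$. *)

From Stdlib Require Import List Arith.
Import ListNotations.

(* Sequences over A: finite words (Fin [] is the empty sequence) or
   infinite sequences (indexed from 0 instead of 1). *)
Inductive Seq (A : Type) : Type :=
| Fin : list A -> Seq A
| Inf : (nat -> A) -> Seq A.
Arguments Fin {A} _.
Arguments Inf {A} _.

Definition infinite_pred {A : Type} (P : A -> Prop) : Prop :=
  ~ exists l : list A, forall a, P a -> In a l.

Definition infinite_type (A : Type) : Prop := infinite_pred (fun _ : A => True).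

Definition in_full_shift {A : Type} (x : Seq A) : Prop :=
  match x with
  | Inf _ => True
  | Fin _ => infinite_type A
  end.

(* length: None means infinity *)
Definition seq_len {A : Type} (x : Seq A) : option nat :=
  match x with
  | Fin l => Some (length l)
  | Inf _ => None
  end.

Definition letter {A : Type} (y : Seq A) (i : nat) : option A :=
  match y with
  | Fin l => nth_error l i
  | Inf f => Some (f i)
  end.

(* shift map: deletes the first letter (convention: sigma(empty) = empty) *)
Definition shift {A : Type} (x : Seq A) : Seq A :=
  match x with
  | Fin [] => Fin []
  | Fin (_ :: l) => Fin l
  | Inf f => Inf (fun n => f (S n))
  end.

Definition cyl {A : Type} (x : list A) (F : list A) (y : Seq A) : Prop :=
  (forall i a, nth_error x i = Some a -> letter y i = Some a) /\
  match letter y (length x) with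
  | Some b => ~ In b F
  | None => True
  end.

Definition is_open {A : Type} (U : Seq A -> Prop) : Prop :=
  forall y, U y -> exists x F, cyl x F y /\ forall z, cyl x F z -> U z.

Definition is_closed {A : Type} (C : Seq A -> Prop) : Prop :=
  is_open (fun y => ~ C y).

Definition prepend {A : Type} (w : list A) (f : nat -> A) : nat -> A :=
  fun n => if n <? length w then nth n w (f 0) else f (n - length w).

Definition cat_letter_seq {A : Type} (x : list A) (a : A) (y : Seq A) : Seq A :=
  match y with
  | Fin l => Fin (x ++ a :: l)
  | Inf f => Inf (prepend (x ++ [a]) f)
  end.

Definition is_shift_space {A : Type} (L : Seq A -> Prop) : Prop :=
  (forall x, L x -> in_full_shift x) /\
  is_closed L /\
  (forall x, L x -> L (shift x)) /\
  (forall x : list A, L (Fin x) ->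
     infinite_pred (fun a => exists y, in_full_shift y /\ L (cat_letter_seq x a y))).

Definition block {A : Type} (f : nat -> A) (i n : nat) : list A :=
  map f (seq i n).

Definition XF_inf {A : Type} (Fw : list A -> Prop) (f : nat -> A) : Prop :=
  forall i n, ~ Fw (block f i n).

Definition XF {A : Type} (Fw : list A -> Prop) (x : Seq A) : Prop :=
  match x with
  | Inf f => XF_inf Fw f
  | Fin w => infinite_pred (fun a => exists g : nat -> A,
                                   XF_inf Fw (prepend (w ++ [a]) g))
  end.

Definition is_N_step_shift {A : Type} (N : nat) (L : Seq A -> Prop) : Prop :=
  is_shift_space L /\
  exists Fw : list A -> Prop,
    (forall w, Fw w -> length w = S N) /\
    (forall x, L x <-> XF Fw x).

(* continuity of phi restricted to L (subspace topologies) *)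
Definition continuous_on {A B : Type} (L : Seq A -> Prop) (phi : Seq A -> Seq B) : Prop :=
  forall V : Seq B -> Prop, is_open V ->
    exists U : Seq A -> Prop, is_open U /\
      forall x, L x -> (V (phi x) <-> U x).

Definition conjugacy {A B : Type} (L : Seq A -> Prop) (Y : Seq B -> Prop)
  (phi : Seq A -> Seq B) : Prop :=
  (forall x, L x -> Y (phi x)) /\
  (forall x x', L x -> L x' -> phi x = phi x' -> x = x') /\
  (forall y, Y y -> exists x, L x /\ phi x = y) /\
  continuous_on L phi /\
  (forall x, L x -> phi (shift x) = shift (phi x)) /\
  (forall x, L x -> seq_len (phi x) = seq_len x).

Definition conjugate {A B : Type} (L : Seq A -> Prop) (Y : Seq B -> Prop) : Prop :=
  exists phi, conjugacy L Y phi.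

From Stdlib Require Import List Arith Lia Classical FunctionalExtensionality.
Import ListNotations.

(* In an M-step shift space, whether a point y has a shift preimage (some a y
   in the space) depends only on the first M letters of y.  A conjugacy
   preserves shift preimages and lengths and is continuous, so in a shift
   conjugate to an M-step one, a word w of length M that is a limit of points
   with preimages has a preimage itself.  Over the alphabet nat, the
   (M+1)-step shift forbidding the words a 0^M c with a <> c violates this at
   w = 0^M: the only extensions of a 0^M are by a, so 0^M has no preimage,
   while the points 0^M c c c ... (c outside any given finite set) approach
   0^M and have the preimage c 0^M c c c .... *)

Lemma infinite_pred_mono {A} (P Q : A -> Prop) :
  infinite_pred P -> (forall a, P a -> Q a) -> infinite_pred Q.
Proof. intros HP HPQ [l Hl]. apply HP. exists l. auto. Qed.

Lemma infinite_pred_witness {A} (P : A -> Prop) : infinite_pred P -> exists a, P a.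
Proof.
  intros HP. apply NNPP. intros Hnone. apply HP. exists [].
  intros a Ha. apply Hnone. eauto.
Qed.

Lemma list_sum_fresh (l : list nat) : ~ In (S (list_sum l)) l.
Proof.
  assert (Hle : forall a, In a l -> a <= list_sum l).
  { induction l as [|b l IH]; simpl; [tauto|].
    intros a [->|Ha]; [lia|]. specialize (IH _ Ha). lia. }
  intros Hin. apply Hle in Hin. lia.
Qed.

Lemma nat_infinite : infinite_type nat.
Proof. intros [l Hl]. exact (list_sum_fresh l (Hl _ I)). Qed.

Lemma nth_error_app_l {A} (l r : list A) k a :
  nth_error l k = Some a -> nth_error (l ++ r) k = Some a.
Proof.
  intros Hk. rewrite nth_error_app1; [exact Hk|].
  apply nth_error_Some. congruence.
Qed.

Lemma nth_error_repeat_Some {A} (b a : A) n i :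
  nth_error (repeat b n) i = Some a -> i < n /\ a = b.
Proof.
  intros Hi. split.
  - rewrite <- (repeat_length b n). apply nth_error_Some. congruence.
  - eapply repeat_spec, nth_error_In, Hi.
Qed.

Lemma length_block {A} (f : nat -> A) i n : length (block f i n) = n.
Proof. unfold block. now rewrite length_map, length_seq. Qed.

Lemma nth_error_block {A} (f : nat -> A) i n k :
  k < n -> nth_error (block f i n) k = Some (f (i + k)).
Proof.
  intros Hk. unfold block. rewrite nth_error_map.
  rewrite nth_error_nth' with (d := 0) by (rewrite length_seq; lia).
  now rewrite seq_nth.
Qed.

Lemma block_shift {A} (f : nat -> A) i n : block (fun k => f (S k)) i n = block f (S i) n.
Proof. unfold block. now rewrite <- seq_shift, map_map. Qed.

Lemma block_of_prefix {A} (u : list A) (f : nat -> A) :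
  (forall i a, nth_error u i = Some a -> f i = a) -> block f 0 (length u) = u.
Proof.
  intros Hu. apply nth_error_ext. intros i.
  destruct (Nat.lt_ge_cases i (length u)) as [Hi|Hi].
  - rewrite nth_error_block by exact Hi.
    destruct (nth_error u i) as [a|] eqn:E.
    + simpl. now rewrite (Hu _ _ E).
    + apply nth_error_None in E. lia.
  - rewrite (proj2 (nth_error_None u i) Hi).
    apply nth_error_None. now rewrite length_block.
Qed.

Lemma nth_prepend {A} (u : list A) g i a :
  nth_error u i = Some a -> prepend u g i = a.
Proof.
  intros Hi. unfold prepend.
  assert (Hlt : i < length u) by (apply nth_error_Some; congruence).
  apply Nat.ltb_lt in Hlt. rewrite Hlt. now apply nth_error_nth.
Qed.

Lemma block_prepend {A} (u : list A) g : block (prepend u g) 0 (length u) = u.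
Proof. apply block_of_prefix. intros i a. apply nth_prepend. Qed.

Lemma prepend_block {A} (u : list A) (h : nat -> A) :
  block h 0 (length u) = u -> prepend u (fun n => h (n + length u)) = h.
Proof.
  intros Hu. apply functional_extensionality. intros n. unfold prepend.
  destruct (n <? length u) eqn:En.
  - apply Nat.ltb_lt in En. rewrite <- Hu at 1.
    rewrite (nth_indep _ _ (h 0)) by (rewrite length_block; lia).
    unfold block. now rewrite map_nth, seq_nth.
  - apply Nat.ltb_ge in En. f_equal. lia.
Qed.

Definition fcons {A} (a : A) (f : nat -> A) : nat -> A :=
  fun n => match n with 0 => a | S k => f k end.

Lemma prepend_cons {A} (a : A) u g : prepend (a :: u) g = fcons a (prepend u g).
Proof. apply functional_extensionality. now intros [|n]. Qed.

Lemma block_fcons_0 {A} (a : A) f n : block (fcons a f) 0 (S n) = a :: block f 0 n.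
Proof. unfold block. simpl. f_equal. now rewrite <- seq_shift, map_map. Qed.

Lemma block_fcons_S {A} (a : A) f k n : block (fcons a f) (S k) n = block f k n.
Proof. unfold block. now rewrite <- seq_shift, map_map. Qed.

Lemma cyl_open {A} (w F : list A) : is_open (cyl w F).
Proof. intros y Hy. exists w, F. auto. Qed.

Lemma cyl_refl {A} (w F : list A) : cyl w F (Fin w).
Proof.
  split; [easy|]. simpl.
  now rewrite (proj2 (nth_error_None w (length w)) (le_n _)).
Qed.

Definition scons {A} (a : A) (z : Seq A) : Seq A :=
  match z with Fin l => Fin (a :: l) | Inf f => Inf (fcons a f) end.

Section ForbiddenWords.

Variable A : Type.
Variable Fw : list A -> Prop.

Lemma XF_inf_shift f : XF_inf Fw f -> XF_inf Fw (fun k => f (S k)).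
Proof. intros Hf i n. rewrite block_shift. apply Hf. Qed.

Lemma XF_inf_prepend u h :
  XF_inf Fw h -> block h 0 (length u) = u -> exists g, XF_inf Fw (prepend u g).
Proof. intros Hh Hu. exists (fun n => h (n + length u)). now rewrite prepend_block. Qed.

Lemma XF_inf_extension z : XF Fw z ->
  exists h, XF_inf Fw h /\ forall k a, letter z k = Some a -> h k = a.
Proof.
  destruct z as [l|f]; simpl.
  - intros Hl. destruct (infinite_pred_witness _ Hl) as [c [g Hg]].
    exists (prepend (l ++ [c]) g). split; [exact Hg|].
    intros k a Hk. apply nth_prepend, nth_error_app_l, Hk.
  - intros Hf. exists f. split; [exact Hf|]. congruence.
Qed.

Lemma XF_compl_nbhd_Fin w :
  ~ XF Fw (Fin w) -> exists F, forall z, cyl w F z -> ~ XF Fw z.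
Proof.
  intros Hw. apply NNPP in Hw. destruct Hw as [F HF]. exists F.
  intros z [Hpre Hnext] Hz. destruct (XF_inf_extension _ Hz) as [h [Hh Hzh]].
  destruct (letter z (length w)) as [b|] eqn:Eb.
  - apply Hnext, HF, (XF_inf_prepend _ _ Hh), block_of_prefix.
    intros i a Hi. apply Hzh.
    destruct (Nat.lt_ge_cases i (length w)) as [Hlt|Hge].
    + rewrite nth_error_app1 in Hi by exact Hlt. apply Hpre, Hi.
    + rewrite nth_error_app2 in Hi by exact Hge.
      destruct (i - length w) as [|j] eqn:Ej; [|now destruct j].
      injection Hi as <-. now replace i with (length w) by lia.
  - destruct z as [l|f]; [|discriminate]. simpl in Eb.
    assert (Hlw : l = w).
    { apply nth_error_ext. intros n.
      destruct (nth_error w n) as [c|] eqn:Ec; [now apply Hpre|].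
      apply nth_error_None in Ec, Eb. apply nth_error_None. lia. }
    subst l. apply Hz. now exists F.
Qed.

Lemma XF_compl_nbhd_Inf f :
  ~ XF_inf Fw f -> exists x, cyl x [] (Inf f) /\ forall z, cyl x [] z -> ~ XF Fw z.
Proof.
  intros Hf. apply not_all_ex_not in Hf as [i Hf].
  apply not_all_ex_not in Hf as [n Hf]. apply NNPP in Hf.
  assert (Hpre : forall k a, nth_error (block f 0 (i + n)) k = Some a -> f k = a).
  { intros k a Hk. assert (Hlt : k < i + n).
    { rewrite <- (length_block f 0 (i + n)). apply nth_error_Some. congruence. }
    rewrite nth_error_block in Hk by exact Hlt. simpl in Hk. congruence. }
  exists (block f 0 (i + n)). split.
  - split; [|easy]. intros k a Hk. simpl. f_equal. now apply Hpre.
  - intros z [Hz _] HXz. destruct (XF_inf_extension _ HXz) as [h [Hh Hzh]].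
    apply (Hh i n). replace (block h i n) with (block f i n); [exact Hf|].
    apply map_ext_in. intros k Hk. apply in_seq in Hk.
    symmetry. apply Hzh, Hz. now rewrite nth_error_block by lia.
Qed.

Lemma XF_closed : is_closed (XF Fw).
Proof.
  intros [w|f] Hy.
  - destruct (XF_compl_nbhd_Fin w Hy) as [F HF].
    exists w, F. split; [apply cyl_refl|exact HF].
  - destruct (XF_compl_nbhd_Inf f Hy) as [x Hx]. exists x, []. exact Hx.
Qed.

Lemma XF_shift_space : is_shift_space (XF Fw).
Proof.
  split; [|split; [exact XF_closed|split]].
  - intros [l|f] H; [|exact I]. simpl in *. eapply infinite_pred_mono; [exact H|]. auto.
  - intros [[|b l]|f] H; simpl in *.
    + exact H.
    + eapply infinite_pred_mono; [exact H|]. intros c [g Hg]. exists g.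
      rewrite prepend_cons in Hg. exact (XF_inf_shift _ Hg).
    + exact (XF_inf_shift _ H).
  - intros x H. eapply infinite_pred_mono; [exact H|]. intros a [g Hg].
    exists (Inf g). split; [exact I|exact Hg].
Qed.

Section Step.

Variable M : nat.
Hypothesis Fw_length : forall u, Fw u -> length u = S M.

(* Every forbidden word has length M+1, so a forbidden block of [fcons a f]
   containing the new first letter is exactly [a :: block f 0 M]. *)
Lemma XF_inf_fcons w f a :
  block f 0 M = w -> XF_inf Fw f -> (XF_inf Fw (fcons a f) <-> ~ Fw (a :: w)).
Proof.
  intros Hw Hf. split.
  - intros Haf Hforb. apply (Haf 0 (S M)). now rewrite block_fcons_0, Hw.
  - intros Hn [|k] n Hforb.
    + destruct n as [|n]; [now apply Fw_length in Hforb|].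
      rewrite block_fcons_0 in Hforb. pose proof (Fw_length _ Hforb) as Hlen.
      simpl in Hlen. rewrite length_block in Hlen. injection Hlen as ->.
      rewrite Hw in Hforb. exact (Hn Hforb).
    + rewrite block_fcons_S in Hforb. exact (Hf _ _ Hforb).
Qed.

Lemma XF_scons w z a :
  length w = M -> XF Fw z -> cyl w [] z -> (XF Fw (scons a z) <-> ~ Fw (a :: w)).
Proof.
  intros Hlen Hz [Hpre _]. destruct z as [l|f]; simpl in *.
  - assert (Hblock : forall c g, block (prepend (l ++ [c]) g) 0 M = w).
    { intros c g. rewrite <- Hlen. apply block_of_prefix. intros i b Hi.
      apply nth_prepend, nth_error_app_l, Hpre, Hi. }
    split.
    + intros Hal. destruct (infinite_pred_witness _ Hal) as [c [g Hg]].
      change ((a :: l) ++ [c]) with (a :: (l ++ [c])) in Hg.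
      rewrite prepend_cons in Hg.
      apply (XF_inf_fcons w _ a (Hblock c g) (XF_inf_shift _ Hg)), Hg.
    + intros Hn. eapply infinite_pred_mono; [exact Hz|]. intros c [g Hg]. exists g.
      change ((a :: l) ++ [c]) with (a :: (l ++ [c])). rewrite prepend_cons.
      now apply (XF_inf_fcons w _ a (Hblock c g) Hg).
  - apply XF_inf_fcons; [|exact Hz]. rewrite <- Hlen. apply block_of_prefix.
    intros i b Hi. apply Hpre in Hi. congruence.
Qed.

End Step.

End ForbiddenWords.

Definition has_shift_preimage {A} (X : Seq A -> Prop) (z : Seq A) : Prop :=
  exists p, X p /\ shift p = z /\ seq_len p <> Some 0.

Lemma has_shift_preimage_scons {A} (X : Seq A -> Prop) z :
  has_shift_preimage X z <-> exists a, X (scons a z).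
Proof.
  split.
  - intros [[[|b l]|f] (Hp & Hs & Hl)]; simpl in *; subst z.
    + easy.
    + now exists b.
    + exists (f 0). simpl.
      replace (fcons (f 0) (fun n => f (S n))) with f; [exact Hp|].
      apply functional_extensionality. now intros [|n].
  - intros [a Ha]. exists (scons a z).
    destruct z; repeat split; easy.
Qed.

Lemma step_shift_preimage_of_cyl {B} M (Y : Seq B -> Prop) w z :
  is_N_step_shift M Y -> Y (Fin w) -> length w = M -> Y z -> cyl w [] z ->
  has_shift_preimage Y z -> has_shift_preimage Y (Fin w).
Proof.
  intros [_ [Fw [HFw HY]]] Hw Hlen Hz Hcyl.
  rewrite !has_shift_preimage_scons. intros [a Ha]. exists a.
  apply HY in Ha, Hz, Hw. apply HY.
  apply (XF_scons _ Fw M HFw w (Fin w) a Hlen Hw (cyl_refl w [])).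
  apply (XF_scons _ Fw M HFw w z a Hlen Hz Hcyl), Ha.
Qed.

Lemma conjugacy_shift_preimage {A B} (L : Seq A -> Prop) (Y : Seq B -> Prop) phi x :
  conjugacy L Y phi -> has_shift_preimage L x -> has_shift_preimage Y (phi x).
Proof.
  intros (Hmap & _ & _ & _ & Hcomm & Hlen) [p (Hp & Hs & Hl)].
  exists (phi p). repeat split.
  - apply Hmap, Hp.
  - now rewrite <- Hcomm, Hs.
  - now rewrite Hlen.
Qed.

Lemma conjugacy_shift_preimage_inv {A B} (L : Seq A -> Prop) (Y : Seq B -> Prop) phi x :
  conjugacy L Y phi -> (forall y, L y -> L (shift y)) -> L x ->
  has_shift_preimage Y (phi x) -> has_shift_preimage L x.
Proof.
  intros (Hmap & Hinj & Hsurj & _ & Hcomm & Hlen) HshL Hx [q (Hq & Hs & Hl)].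
  destruct (Hsurj q Hq) as [p [Hp <-]]. exists p. repeat split.
  - exact Hp.
  - apply Hinj; [now apply HshL|exact Hx|]. now rewrite Hcomm.
  - now rewrite <- Hlen.
Qed.

Lemma not_conjugate_step_shift {A B} M (L : Seq A -> Prop) (Y : Seq B -> Prop) w :
  (forall y, L y -> L (shift y)) -> L (Fin w) -> length w = M ->
  ~ has_shift_preimage L (Fin w) ->
  (forall x F, cyl x F (Fin w) -> exists z, L z /\ cyl x F z /\ has_shift_preimage L z) ->
  is_N_step_shift M Y -> ~ conjugate L Y.
Proof.
  intros HshL Hw Hlen Hnopre Hdense HY [phi Hphi].
  pose proof Hphi as (Hmap & _ & _ & Hcont & _ & Hlenphi).
  pose proof (Hlenphi _ Hw) as Hlenw.
  destruct (phi (Fin w)) as [v|g] eqn:Ev; [|discriminate].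
  assert (Hv : length v = M) by (injection Hlenw; congruence).
  destruct (Hcont _ (cyl_open v [])) as [U [HU HUphi]].
  assert (HUw : U (Fin w)) by (apply HUphi; [exact Hw|]; rewrite Ev; apply cyl_refl).
  destruct (HU _ HUw) as [x [F [Hx HxU]]].
  destruct (Hdense x F Hx) as [z [Hz [Hxz Hzpre]]].
  apply Hnopre, (conjugacy_shift_preimage_inv _ _ _ _ Hphi HshL Hw). rewrite Ev.
  apply (step_shift_preimage_of_cyl M Y v (phi z) HY); [| exact Hv | ..].
  - rewrite <- Ev. apply Hmap, Hw.
  - apply Hmap, Hz.
  - apply (HUphi _ Hz), HxU, Hxz.
  - apply (conjugacy_shift_preimage _ _ _ _ Hphi), Hzpre.
Qed.

Definition gap_words (M : nat) (u : list nat) : Prop :=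
  exists a c, u = a :: repeat 0 M ++ [c] /\ a <> c.

Definition gap_periodic (M : nat) (f : nat -> nat) : Prop :=
  forall i, (forall j, 0 < j <= M -> f (i + j) = 0) -> f i = f (i + S M).

Definition zeros_then (M c : nat) : nat -> nat := fun n => if n <? M then 0 else c.

Lemma length_gap_words M u : gap_words M u -> length u = S (S M).
Proof.
  intros (a & c & -> & _). simpl. rewrite length_app, repeat_length. simpl. lia.
Qed.

Lemma XF_inf_gap_words M f : gap_periodic M f -> XF_inf (gap_words M) f.
Proof.
  intros Hf i n (a & c & Hblock & Hac).
  assert (Hn : n = S (S M)).
  { rewrite <- (length_block f i n), <- (length_gap_words M (block f i n)); [easy|].
    now exists a, c. }
  subst n.
  assert (Hletter : forall k, k < S (S M) ->
            nth_error (a :: repeat 0 M ++ [c]) k = Some (f (i + k))).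
  { intros k Hk. rewrite <- Hblock. now apply nth_error_block. }
  apply Hac.
  pose proof (Hletter 0 ltac:(lia)) as Ha. rewrite Nat.add_0_r in Ha.
  pose proof (Hletter (S M) ltac:(lia)) as Hc. simpl in Hc.
  rewrite nth_error_app2, repeat_length, Nat.sub_diag in Hc by (rewrite repeat_length; lia).
  injection Ha as ->. injection Hc as ->.
  apply Hf. intros [|j] Hj; [lia|].
  pose proof (Hletter (S j) ltac:(lia)) as Hz. simpl in Hz.
  rewrite nth_error_app1, nth_error_repeat in Hz by (rewrite ?repeat_length; lia).
  congruence.
Qed.

Lemma zeros_then_lt M c n : n < M -> zeros_then M c n = 0.
Proof. intros Hn. unfold zeros_then. now rewrite (proj2 (Nat.ltb_lt n M) Hn). Qed.

Lemma zeros_then_ge M c n : M <= n -> zeros_then M c n = c.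
Proof. intros Hn. unfold zeros_then. now rewrite (proj2 (Nat.ltb_ge n M) Hn). Qed.

Lemma gap_periodic_zeros_then M c : gap_periodic M (zeros_then M c).
Proof.
  intros i Hzeros. rewrite (zeros_then_ge M c (i + S M)) by lia.
  destruct (Nat.lt_ge_cases i M) as [Hi|Hi]; [|now apply zeros_then_ge].
  specialize (Hzeros M ltac:(lia)). rewrite zeros_then_ge in Hzeros by lia.
  subst c. now apply zeros_then_lt.
Qed.

Lemma gap_periodic_fcons_zeros_then M c :
  c <> 0 -> gap_periodic M (fcons c (zeros_then M c)).
Proof.
  intros Hc [|i] Hzeros; simpl.
  - now rewrite zeros_then_ge by lia.
  - specialize (Hzeros M). destruct M as [|M]; simpl in *.
    + now rewrite !zeros_then_ge by lia.
    + replace (i + S M) with (S (i + M)) in Hzeros by lia. simpl in Hzeros.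
      rewrite zeros_then_ge in Hzeros by lia. now destruct Hc; apply Hzeros; lia.
Qed.

Lemma block_zeros_then M c : block (zeros_then M c) 0 (S M) = repeat 0 M ++ [c].
Proof.
  unfold block. rewrite seq_S, map_app. simpl. rewrite zeros_then_ge by lia. f_equal.
  replace (repeat 0 M) with (map (fun _ => 0) (seq 0 M))
    by now rewrite map_const, length_seq.
  apply map_ext_in. intros n Hn. apply in_seq in Hn. now apply zeros_then_lt.
Qed.

Lemma XF_gap_words_zeros M : XF (gap_words M) (Fin (repeat 0 M)).
Proof.
  eapply infinite_pred_mono; [exact nat_infinite|]. intros c _.
  apply (XF_inf_prepend _ _ _ (zeros_then M c)).
  - apply XF_inf_gap_words, gap_periodic_zeros_then.
  - rewrite length_app, repeat_length, Nat.add_1_r. apply block_zeros_then.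
Qed.

Lemma zeros_no_shift_preimage M : ~ has_shift_preimage (XF (gap_words M)) (Fin (repeat 0 M)).
Proof.
  rewrite has_shift_preimage_scons. intros [a Ha]. apply Ha. exists [a].
  intros c [g Hg]. left.
  destruct (Nat.eq_dec a c) as [|Hac]; [easy|]. exfalso.
  apply (Hg 0 (length ((a :: repeat 0 M) ++ [c]))).
  rewrite block_prepend. now exists a, c.
Qed.

Lemma zeros_shift_preimage_dense M x F :
  cyl x F (Fin (repeat 0 M)) ->
  exists z, XF (gap_words M) z /\ cyl x F z /\ has_shift_preimage (XF (gap_words M)) z.
Proof.
  intros [Hpre Hnext]. simpl in Hpre, Hnext.
  set (c := S (list_sum F)).
  assert (Hx : length x <= M).
  { destruct (Nat.le_gt_cases (length x) M) as [|Hgt]; [easy|].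
    destruct (nth_error x M) as [b|] eqn:Eb.
    - apply Hpre, nth_error_repeat_Some in Eb. lia.
    - apply nth_error_None in Eb. lia. }
  exists (Inf (zeros_then M c)). split; [|split].
  - apply XF_inf_gap_words, gap_periodic_zeros_then.
  - split.
    + intros i a Hi. apply Hpre, nth_error_repeat_Some in Hi as [Hi ->].
      simpl. now rewrite zeros_then_lt.
    + simpl. destruct (Nat.lt_ge_cases (length x) M).
      * rewrite zeros_then_lt by lia. now rewrite nth_error_repeat in Hnext.
      * rewrite zeros_then_ge by lia. apply list_sum_fresh.
  - apply has_shift_preimage_scons. exists c.
    apply XF_inf_gap_words, gap_periodic_fcons_zeros_then. unfold c. lia.
Qed.

Theorem mainTheorem2 : forall M : nat,
  exists (A : Type) (L : Seq A -> Prop),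
    infinite_type A /\
    is_N_step_shift (S M) L /\
    forall (B : Type) (Y : Seq B -> Prop),
      is_N_step_shift M Y -> ~ conjugate L Y.
Proof.
  intros M. exists nat, (XF (gap_words M)).
  pose proof (XF_shift_space _ (gap_words M)) as Hshift.
  split; [exact nat_infinite|split].
  - split; [exact Hshift|]. exists (gap_words M).
    split; [apply length_gap_words|easy].
  - intros B Y HY. apply (not_conjugate_step_shift M _ Y (repeat 0 M)).
    + apply Hshift.
    + apply XF_gap_words_zeros.
    + apply repeat_length.
    + apply zeros_no_shift_preimage.
    + apply zeros_shift_preimage_dense.
    + exact HY.
Qed.
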